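(* For every $n\geq 4$, $c_0(W_n)=2$.
   Context: The wheel $W_n$ ($n\geq 4$) is the cycle $C_{n-1}$ together with one additional vertex adjacent to all cycle vertices. Graphs are reflexive (a player may stay in place). The 0-visibility game: $k$ cops and one robber; cops choose starting vertices, then the robber; in each round all cops move (each to an adjacent vertex or staying), then the robber moves. The cops never see the robber (the game ends when a cop occupies the robber's vertex), while the robber sees everything and knows the cops' strategy in advance; hence a cop strategy is a fixed sequence of positions of the cops, consecutive positions of each cop being equal or adjacent, and it is winning if every robber walk is caught after finitely many rounds. The 0-visibility cop number $c_0(G)$ is the least $k$ for which $k$ cops have a winning strategy. *)

From mathcomp Require Import all_boot.
Set Implicit Arguments. Unset Strict Implicit. Unset Printing Implicit Defensive.

(* Wheel W_n on vertex set 'I_n: vertex 0 is the hub, vertices 1..n-1 form the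
   cycle C_{n-1} (vertex i is adjacent to i+1, indices of the cycle taken mod n-1). *)
Definition wheel_adj (n : nat) : rel 'I_n :=
  fun x y =>
    [|| x == y, nat_of_ord x == 0, nat_of_ord y == 0 |
     [&& 0 < x, 0 < y &
         ((x.-1).+1 %% n.-1 == y.-1) || ((y.-1).+1 %% n.-1 == x.-1)]].

(* A cop strategy for k cops: the sequence s t of positions of the cops after
   their move in round t (s 0 = starting positions); each cop moves along
   adjacency (or stays, graph being reflexive). *)
Definition cop_strategy (V : finType) (adj : rel V) (k : nat)
  (s : nat -> 'I_k -> V) : Prop :=
  forall t (i : 'I_k), adj (s t i) (s t.+1 i).

(* A robber walk: r 0 is the starting vertex, r t the position after the
   robber's move in round t. *)
Definition robber_walk (V : finType) (adj : rel V) (r : nat -> V) : Prop :=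
  forall t, adj (r t) (r t.+1).

(* The robber is caught: at some time a cop stands on the robber's vertex,
   either right after the robber placed/moved (s t i = r t) or right after
   the cops' next move (s t.+1 i = r t). *)
Definition caught (V : finType) (k : nat) (s : nat -> 'I_k -> V)
  (r : nat -> V) : Prop :=
  exists t, exists i : 'I_k, s t i = r t \/ s t.+1 i = r t.

Definition zero_vis_win (V : finType) (adj : rel V) (k : nat) : Prop :=
  exists s : nat -> 'I_k -> V, cop_strategy adj s /\
    forall r : nat -> V, robber_walk adj r -> caught s r.

Definition c0_eq (V : finType) (adj : rel V) (k : nat) : Prop :=
  zero_vis_win adj k /\ forall j, j < k -> ~ zero_vis_win adj j.

From mathcomp Require Import all_boot zify.
From Stdlib Require Import Classical.

Set Implicit Arguments.
Unset Strict Implicit.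
Unset Printing Implicit Defensive.

(* Cop 0 alternates between the hub and the rim vertex 2; as the robber would be
   caught before or after that cop's move, it never stands on either, so it is
   confined to the rim path 3, 4, ..., n-1, 1.  Cop 1 starts at 1 and sweeps
   this path n-1, n-2, ..., 3; the robber stays strictly ahead of it
   (r_t + t < n), which is impossible once t = n-3.
   One cop does not suffice: every closed neighbourhood has at least three
   vertices, so in every round the robber can step to a vertex occupied by the
   cop neither before nor after its move. *)

Lemma cops_lose_of_large_neighbourhoods (V : finType) (adj : rel V) (k : nat)
    (x0 : V) :
  (forall x, 2 * k < #|[set y | adj x y]|) -> ~ zero_vis_win adj k.
Proof.
move=> large [s [_ s_wins]].
pose occupied t := [set s t i | i : 'I_k] :|: [set s t.+1 i | i : 'I_k].
have occupied_small t : #|occupied t| <= 2 * k.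
  rewrite mul2n -addnn (leq_trans (leq_card_setU _ _)) //.
  by rewrite leq_add // (leq_trans (leq_imset_card _ _)) ?card_ord.
pose next t x := odflt x [pick y | adj x y && (y \notin occupied t)].
have nextP t x : adj x (next t x) && (next t x \notin occupied t).
  rewrite /next; case: pickP => [y -> //|none].
  have : [set y | adj x y] \subset occupied t.
    apply/subsetP => y; rewrite inE => adj_xy.
    by move: (none y); rewrite adj_xy /= => /negbFE.
  by move/subset_leq_card/(leq_trans (large x)); rewrite ltnNge occupied_small.
pose r := fix r t := if t is t'.+1 then next t (r t') else next 0 x0.
have r_free t : r t \notin occupied t.
  by case: t => [|t]; [case/andP: (nextP 0 x0) | case/andP: (nextP t.+1 (r t))].
have [t [i caught_ti]] : caught s r.
  by apply: s_wins => t; case/andP: (nextP t.+1 (r t)).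
move: (r_free t); rewrite !inE negb_or.
by case: caught_ti => <-; rewrite imset_f ?andbF.
Qed.

Section Wheel.
Variable n : nat.
Local Notation N := n.+4.
Local Notation wheel := (@wheel_adj N).

Definition cycle_succ (x : nat) : nat := if x == n.+3 then 1 else x.+1.

Lemma wheel_adj_cycleE (x y : 'I_N) : 0 < x -> 0 < y ->
  wheel x y = [|| x == y :> nat, y == cycle_succ x :> nat | x == cycle_succ y :> nat].
Proof.
move=> x_gt0 y_gt0; have ltxN := ltn_ord x; have ltyN := ltn_ord y.
rewrite /wheel_adj /cycle_succ /=.
rewrite x_gt0 y_gt0 !prednK // (gtn_eqF x_gt0) (gtn_eqF y_gt0) /=.
have modS z : 0 < z < N -> z %% n.+3 = if z == n.+3 then 0 else z.
  by move=> z_bd; case: eqP => [->|ne]; rewrite ?modnn ?modn_small //; lia.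
rewrite !modS ?x_gt0 ?y_gt0 //.
by rewrite -val_eqE /=; case: (_ =P n.+3); case: (_ =P n.+3); lia.
Qed.

Definition hub : 'I_N := ord0.

Lemma wheel_adj_hubl (x : 'I_N) : wheel hub x.
Proof. by rewrite /wheel_adj /= orbT. Qed.

Lemma wheel_adj_hubr (x : 'I_N) : wheel x hub.
Proof. by rewrite /wheel_adj /= !orbT. Qed.

Lemma wheel_nbhd_card_gt2 (x : 'I_N) : 2 < #|[set y | wheel x y]|.
Proof.
have nbhd3 (a b c : 'I_N) : [&& a != b, a != c & b != c] ->
    [&& wheel x a, wheel x b & wheel x c] -> 2 < #|[set y | wheel x y]|.
  move=> /and3P[ab ac bc] /and3P[xa xb xc].
  apply: leq_trans (subset_leq_card (_ : [set a; b; c] \subset _)).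
    by rewrite -setUA cardsU1 cards2 !inE negb_or ab ac bc.
  by apply/subsetP => y; rewrite !inE -orbA => /or3P[] /eqP->.
have ltxN := ltn_ord x.
have [x0|x_gt0] := posnP x.
  apply: (nbhd3 hub (inord 1) (inord 2)).
    by rewrite -!val_eqE /= !inordK.
  by rewrite /wheel_adj x0 /= !orbT.
have succ_lt : cycle_succ x < N by rewrite /cycle_succ; case: ifP => /eqP; lia.
apply: (nbhd3 x hub (inord (cycle_succ x))).
  by rewrite -!val_eqE /= inordK // /cycle_succ; case: ifP => /eqP; lia.
have succ_gt0 : 0 < cycle_succ x by rewrite /cycle_succ; case: ifP.
rewrite {1}/wheel_adj eqxx wheel_adj_hubr wheel_adj_cycleE ?inordK //.
by rewrite eqxx orbT.
Qed.

Definition sweep_pos (t : nat) : nat := if t == 0 then 1 else N - minn t n.+1.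

Definition wheel_strategy (t : nat) (i : 'I_2) : 'I_N :=
  if i == ord0 then (if odd t then inord 2 else hub) else inord (sweep_pos t).

Lemma sweep_pos_lt t : sweep_pos t < N.
Proof. by rewrite /sweep_pos; case: eqP; lia. Qed.

Lemma wheel_strategy_moves : cop_strategy wheel wheel_strategy.
Proof.
move=> t i; rewrite /wheel_strategy; case: eqP => _.
  by rewrite /=; case: (odd t); [exact: wheel_adj_hubr | exact: wheel_adj_hubl].
rewrite wheel_adj_cycleE !inordK ?sweep_pos_lt // /sweep_pos /cycle_succ /=;
  by case: (t =P 0) => ?; do ?[case: ifP => /eqP ?]; lia.
Qed.

Lemma sweep_catches (r : nat -> 'I_N) : robber_walk wheel r ->
  ~ (forall t, [&& 0 < r t, r t != 2 :> nat, r t != sweep_pos t :> nat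
                 & r t != sweep_pos t.+1 :> nat]).
Proof.
move=> walk avoid.
have ahead t : t <= n.+1 -> 3 <= r t /\ r t + t < N.
  elim: t => [_|t IH le_tn].
    by have := avoid 0; have := ltn_ord (r 0); rewrite /sweep_pos /=; lia.
  have [ge3 ahead_t] := IH (ltnW le_tn).
  have /and4P[rt_gt0 _ _ _] := avoid t; have /and4P[rSt_gt0 _ _ _] := avoid t.+1.
  have := walk t; rewrite wheel_adj_cycleE // /cycle_succ.
  have := avoid t; have := avoid t.+1; have := ltn_ord (r t.+1); rewrite /sweep_pos /=.
  by do ?[case: ifP => /eqP ?]; lia.
by have := ahead n.+1 (leqnn _); lia.
Qed.

Lemma wheel_strategy_wins (r : nat -> 'I_N) :
  robber_walk wheel r -> caught wheel_strategy r.
Proof.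
move=> walk; apply: NNPP => escapes; apply: (sweep_catches walk) => t.
have missed (i : 'I_2) : (wheel_strategy t i != r t) && (wheel_strategy t.+1 i != r t).
  by apply/andP; split; apply/eqP => hit; apply: escapes; exists t, i; [left | right].
have := missed ord0; have := missed ord_max.
rewrite /wheel_strategy /= -!val_eqE /= !inordK ?sweep_pos_lt //.
by case: (odd t); rewrite /= inordK //; lia.
Qed.

End Wheel.

Theorem mainTheorem19 (n : nat) (hn : 4 <= n) : c0_eq (@wheel_adj n) 2.
Proof.
case: n hn => [|[|[|[|n]]]] // _; split.
  exists (@wheel_strategy n); split; first exact: wheel_strategy_moves.
  exact: wheel_strategy_wins.
move=> k /ltnSE k_le1; apply: (cops_lose_of_large_neighbourhoods (hub n)) => x.
by apply: (leq_ltn_trans _ (wheel_nbhd_card_gt2 x)); lia.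
Qed.
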